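(* Let $G$ be a finite simple graph on $n$ vertices with at least one edge, let $\lambda_1$ and $\lambda_n$ be the largest and smallest eigenvalues of its (0/1) adjacency matrix, let $P_{\lambda_1}$ be the orthogonal projection onto the $\lambda_1$-eigenspace, and put $p=\langle\boldsymbol 1,P_{\lambda_1}\boldsymbol 1\rangle$. If $\frac{-\lambda_n(n-p)}{\lambda_1 p}\le 1$, then $$\vartheta(G)\le\frac{-n\lambda_n}{\lambda_1-\lambda_n}\cdot\frac{p}{n}\left(1+\sqrt{\frac{\lambda_1(n-p)}{-\lambda_n\,p}}\right)^2.$$
   Context: $\boldsymbol 1$ is the all-ones vector and $\langle\cdot,\cdot\rangle$ the standard inner product. $\vartheta(G)$ is the Lovász theta function, $\vartheta(G)=\inf_B\lambda_{\max}(B)$ over real symmetric $B$ with $B_{ij}=1$ whenever $i=j$ or $i,j$ are non-adjacent. *)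

From HB Require Import structures.
From mathcomp Require Import all_boot all_order all_algebra.
From mathcomp Require Import all_classical all_reals.
Set Implicit Arguments. Unset Strict Implicit. Unset Printing Implicit Defensive.
Import Order.TTheory GRing.Theory Num.Theory.
Local Open Scope ring_scope.
Local Open Scope classical_set_scope.

Definition simple_graph (n : nat) (e : rel 'I_n) : Prop :=
  (forall i, ~~ e i i) /\ (forall i j, e i j = e j i).

Definition has_edge (n : nat) (e : rel 'I_n) : Prop := exists i j, e i j.

Definition adjmx (R : realType) (n : nat) (e : rel 'I_n) : 'M[R]_n :=
  \matrix_(i, j) (e i j)%:R.

Definition symmetric_mx (R : realType) (n : nat) (B : 'M[R]_n) : Prop := B^T = B.

(* largest / smallest eigenvalue (mathcomp's [eigenvalue]) of a matrix; for real
   symmetric matrices the set of eigenvalues is finite and nonempty (n > 0),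
   so these are the max / min eigenvalue. *)
Definition lambda_max (R : realType) (n : nat) (B : 'M[R]_n) : R :=
  sup [set a : R | eigenvalue B a].
Definition lambda_min (R : realType) (n : nat) (B : 'M[R]_n) : R :=
  inf [set a : R | eigenvalue B a].

Definition theta_feasible (R : realType) (n : nat) (e : rel 'I_n) (B : 'M[R]_n) : Prop :=
  symmetric_mx B /\ (forall i j, (i == j) || ~~ e i j -> B i j = 1).

Definition lovasz_theta (R : realType) (n : nat) (e : rel 'I_n) : R :=
  inf [set lambda_max B | B in [set B : 'M[R]_n | theta_feasible e B]].

Definition orth_proj_onto (R : realType) (n : nat) (P V : 'M[R]_n) : Prop :=
  P^T = P /\ P *m P = P /\ (P == V)%MS.

Definition ones (R : realType) (n : nat) : 'cV[R]_n := const_mx 1.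
Definition ip (R : realType) (n : nat) (u v : 'cV[R]_n) : R := (u^T *m v) 0 0.

From HB Require Import structures.
From mathcomp Require Import all_boot all_order all_algebra.
From mathcomp Require Import all_classical all_reals.
From mathcomp Require Import topology normedtype derive.
From mathcomp Require Import ring lra.
Set Implicit Arguments. Unset Strict Implicit. Unset Printing Implicit Defensive.

Import Order.TTheory GRing.Theory Num.Theory.
Import numFieldNormedType.Exports.
Local Open Scope ring_scope.

(* Every matrix [J - t A] is feasible for the theta program.  Split a vector
   [v = x + w] with [x = v P] in the top eigenspace and [w P = 0].  Then
   [v (J - t A) v^T = (<x,1> + <w,1>)^2 - t (l1 |x|^2 + w A w^T)], and
   Cauchy-Schwarz gives [<x,1>^2 <= p |x|^2] and [<w,1>^2 <= (n - p) |w|^2],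
   while [w A w^T >= ln |w|^2].  This reduces the bound on [lambda_max (J - t A)]
   to an inequality between two weighted squares, which a suitable choice of
   [t >= 0] settles; [t >= 0] is exactly the hypothesis on [p].  Perron-Frobenius
   (the top eigenspace of a nonnegative matrix contains a nonnegative vector)
   gives [p > 0]. *)

Definition mxform (R : pzRingType) (n : nat) (A : 'M[R]_n) (u v : 'rV[R]_n) : R :=
  (u *m A *m v^T) 0 0.

Notation dotr u v := (mxform 1%:M u v).

Section MxForm.
Variables (R : comPzRingType) (n : nat).
Implicit Types (u v w : 'rV[R]_n) (A M : 'M[R]_n).

Lemma mxformE A u v : mxform A u v = \sum_i \sum_j u 0 i * A i j * v 0 j.
Proof.
rewrite /mxform mxE; under eq_bigr => j _ do rewrite !mxE big_distrl /=.
by rewrite exchange_big.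
Qed.

Lemma dotrE u v : dotr u v = \sum_i u 0 i * v 0 i.
Proof. by rewrite /mxform mulmx1 mxE; apply: eq_bigr => i _; rewrite mxE. Qed.

Lemma mxform0l A v : mxform A 0 v = 0.
Proof. by rewrite /mxform !mul0mx mxE. Qed.

Lemma mxform0r A u : mxform A u 0 = 0.
Proof. by rewrite /mxform trmx0 mulmx0 mxE. Qed.

Lemma mxformDl A u v w : mxform A (u + v) w = mxform A u w + mxform A v w.
Proof. by rewrite /mxform !mulmxDl mxE. Qed.

Lemma mxformDr A u v w : mxform A w (u + v) = mxform A w u + mxform A w v.
Proof. by rewrite /mxform linearD /= mulmxDr mxE. Qed.

Lemma mxformZl A a u w : mxform A (a *: u) w = a * mxform A u w.
Proof. by rewrite /mxform -!scalemxAl mxE. Qed.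

Lemma mxformZr A a u w : mxform A w (a *: u) = a * mxform A w u.
Proof. by rewrite /mxform linearZ /= -scalemxAr mxE. Qed.

Lemma mxformNl A u w : mxform A (- u) w = - mxform A u w.
Proof. by rewrite -scaleN1r mxformZl mulN1r. Qed.

Lemma mxformNr A u w : mxform A w (- u) = - mxform A w u.
Proof. by rewrite -scaleN1r mxformZr mulN1r. Qed.

Lemma mxformBl A u v w : mxform A (u - v) w = mxform A u w - mxform A v w.
Proof. by rewrite mxformDl mxformNl. Qed.

Lemma mxformBr A u v w : mxform A w (u - v) = mxform A w u - mxform A w v.
Proof. by rewrite mxformDr mxformNr. Qed.

Lemma mxform_addmx A M u w : mxform (A + M) u w = mxform A u w + mxform M u w.
Proof. by rewrite /mxform mulmxDr mulmxDl mxE. Qed.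

Lemma mxform_scalemx a A u w : mxform (a *: A) u w = a * mxform A u w.
Proof. by rewrite /mxform -scalemxAr -scalemxAl mxE. Qed.

Lemma mxform_oppmx A u w : mxform (- A) u w = - mxform A u w.
Proof. by rewrite /mxform mulmxN mulNmx mxE. Qed.

Lemma mxform_tr A u v : mxform A^T u v = mxform A v u.
Proof.
transitivity ((v *m A *m u^T)^T 0 0); last by rewrite mxE.
by rewrite !trmx_mul trmxK mulmxA.
Qed.

Lemma mxform_sym A u v : A^T = A -> mxform A u v = mxform A v u.
Proof. by move=> symA; rewrite -mxform_tr symA. Qed.

Lemma dotrC u v : dotr u v = dotr v u.
Proof. by rewrite mxform_sym ?trmx1. Qed.

Lemma dotr_mulmxl M u v : dotr (u *m M) v = mxform M u v.
Proof. by rewrite /mxform !mulmx1. Qed.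

Lemma dotr_mulmxr M u v : dotr u (v *m M) = mxform M^T u v.
Proof. by rewrite dotrC dotr_mulmxl mxform_tr. Qed.

Lemma mxform_eigen A a u v : u *m A = a *: u -> mxform A u v = a * dotr u v.
Proof. by move=> uA; rewrite -dotr_mulmxl uA mxformZl. Qed.

Lemma mxform_delta A i j : mxform A (delta_mx 0 i) (delta_mx 0 j) = A i j.
Proof. by rewrite /mxform -rowE trmx_delta -colE !mxE. Qed.

Lemma mxform_outer w v : mxform (w^T *m w) v v = dotr v w ^+ 2.
Proof.
rewrite -dotr_mulmxl mulmxA [v *m w^T]mx11_scalar mul_scalar_mx mxformZl.
by rewrite dotrC expr2 /mxform mulmx1.
Qed.

Lemma dotr_const1 : dotr (const_mx 1 : 'rV[R]_n) (const_mx 1) = n%:R.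
Proof.
by rewrite dotrE (eq_bigr (fun=> 1)) => [|i _]; rewrite ?sumr_const ?card_ord // !mxE mulr1.
Qed.

Lemma const1_outer : const_mx 1 = (const_mx 1 : 'rV[R]_n)^T *m const_mx 1 :> 'M_n.
Proof. by apply/matrixP => i j; rewrite !mxE big_ord1 !mxE mulr1. Qed.

End MxForm.

Lemma ip_ones_mulmx (R : realType) (n : nat) (M : 'M[R]_n) :
  ip (ones R n) (M *m ones R n) = mxform M (const_mx 1) (const_mx 1).
Proof. by rewrite /ip /ones /mxform !trmx_const mulmxA. Qed.

Lemma quadratic_le0_linear_eq0 (R : realFieldType) (d c : R) :
  (forall s, 2 * s * d + s ^+ 2 * c <= 0) -> d = 0.
Proof.
move=> hle; pose k := (`|c| + 1)^-1.
have k_gt0 : 0 < k by rewrite invr_gt0 ltr_pwDr ?normr_ge0.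
have kc_le1 : k * `|c| <= 1.
  by rewrite /k mulrC ler_pdivrMr ?ltr_pwDr ?normr_ge0 // mul1r lerDl.
have Nc_le : - `|c| <= c by rewrite lerNl ler_normr lexx orbT.
have hk : d ^+ 2 * k * (2 + k * c) <= 0.
  by have := hle (d * k); lra.
have h1 : 1 <= 2 + k * c by nra.
have hd : d ^+ 2 * k <= 0 by nra.
by apply/eqP; rewrite -sqrf_eq0 eq_le sqr_ge0 andbT; nra.
Qed.

Section RealMxForm.
Variables (R : realFieldType) (n : nat).
Implicit Types (u v w : 'rV[R]_n) (A : 'M[R]_n).

Lemma dotr_ge0 u : 0 <= dotr u u.
Proof. by rewrite dotrE sumr_ge0 // => i _; rewrite -expr2 sqr_ge0. Qed.

Lemma dotr_eq0 u : (dotr u u == 0) = (u == 0).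
Proof.
apply/idP/idP => [|/eqP->]; last by rewrite mxform0l.
rewrite dotrE psumr_eq0 => [/allP u0|i _]; last by rewrite -expr2 sqr_ge0.
apply/eqP/rowP => i; rewrite mxE.
by have := u0 i (mem_index_enum _); rewrite -expr2 sqrf_eq0 => /eqP.
Qed.

Lemma dotr_gt0 u : u != 0 -> 0 < dotr u u.
Proof. by move=> u0; rewrite lt_neqAle dotr_ge0 andbT eq_sym dotr_eq0. Qed.

Lemma dotr_CauchySchwarz u w : dotr u w ^+ 2 <= dotr u u * dotr w w.
Proof.
have [->|w0] := eqVneq w 0; first by rewrite !mxform0r expr0n mulr0.
have w_gt0 := dotr_gt0 w0.
have := dotr_ge0 (u - (dotr u w / dotr w w) *: w).
rewrite !(mxformBl, mxformBr, mxformZl, mxformZr) (dotrC w u).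
set a := dotr u u; set b := dotr u w; set c := dotr w w.
have -> : a - b / c * b - (b / c * b - b / c * (b / c * c)) = a - b ^+ 2 / c.
  by field; rewrite gt_eqF.
by rewrite subr_ge0 ler_pdivrMr.
Qed.

(* For [D := A - M] the quadratic [s |-> mxform D (v + s u) (v + s u)] is
   nonpositive and vanishes at [0], so its linear coefficient [mxform D u v]
   is [0] for every [u]; hence [v *m D = 0]. *)
Lemma rayleigh_max_eigenvector A M v : A^T = A ->
  (forall u, mxform A u u <= M * dotr u u) -> mxform A v v = M * dotr v v ->
  v *m A = M *: v.
Proof.
move=> symA hle heq; pose D := A - M%:M.
have DE u w : mxform D u w = mxform A u w - M * dotr u w.
  by rewrite mxform_addmx mxform_oppmx -scalemx1 mxform_scalemx.
have symD : D^T = D by rewrite /D linearB /= symA tr_scalar_mx.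
have Dv0 u : mxform D u v = 0.
  apply: (@quadratic_le0_linear_eq0 _ _ (mxform D u u)) => s.
  have := hle (v + s *: u); rewrite -subr_le0 -DE.
  rewrite mxformDl !mxformDr !mxformZl !mxformZr (mxform_sym u v symD) (DE v v) heq subrr.
  by move=> h; lra.
have : dotr (v *m D) (v *m D) = 0 by rewrite -(Dv0 (v *m D)) dotr_mulmxr symD.
move/eqP; rewrite dotr_eq0 /D mulmxBr subr_eq0 => /eqP ->.
by rewrite mul_mx_scalar.
Qed.

Lemma eigenvalue_le_rayleigh A M a : eigenvalue A a ->
  (forall u, mxform A u u <= M * dotr u u) -> a <= M.
Proof.
move=> /eigenvalueP [v vA v0] hle; have := hle v.
by rewrite (mxform_eigen _ vA) ler_pM2r // dotr_gt0.
Qed.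

End RealMxForm.

Section Rayleigh.
Variables (R : realType) (n : nat).
Hypothesis n_gt0 : (0 < n)%N.
Implicit Types (u v : 'rV[R]_n) (A : 'M[R]_n).
Local Open Scope classical_set_scope.

Lemma continuous_mxform A : continuous (fun v : 'rV[R]_n => mxform A v v).
Proof.
rewrite (_ : (fun v => _) = fun v => \sum_i \sum_j v 0 i * A i j * v 0 j).
  apply: continuous_big; first exact: add_continuous.
  move=> i _; apply: continuous_big; first exact: add_continuous.
  move=> j _ x; apply: (@continuousM R _ (fun v => v 0 i * A i j)); last first.
    exact: coord_continuous.
  apply: (@continuousZr_tmp R R^o _ (fun v : 'rV[R]_n => v 0 i)).
  exact: coord_continuous.
by apply: funext => v; rewrite mxformE.
Qed.

Let unit_sphere := [set v : 'rV[R]_n | dotr v v = 1].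

Let compact_unit_sphere : compact unit_sphere.
Proof.
apply: bounded_closed_compact.
  exists 1; split => // x x_gt1 v /= v1.
  rewrite /Num.Def.normr /= mx_normrE (bigmax_le _ (ltW (lt_trans ltr01 x_gt1))) //=.
  move=> -[i j] _ /=; apply: le_trans (ltW x_gt1); rewrite (ord1 i).
  have : v 0 j ^+ 2 <= 1.
    rewrite -v1 dotrE (bigD1 j) //= -expr2 lerDl sumr_ge0 // => k _.
    by rewrite -expr2 sqr_ge0.
  by rewrite -real_normK ?num_real // => h; have := normr_ge0 (v 0 j); nra.
rewrite (_ : unit_sphere = (fun v => dotr v v) @^-1` [set x | x = 1]) //.
by apply: preimage_closed; [move=> x _; apply: continuous_mxform | apply: closed_eq].
Qed.

Lemma exists_rayleigh_max A : A^T = A ->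
  exists2 M, eigenvalue A M & forall u, mxform A u u <= M * dotr u u.
Proof.
move=> symA; pose i0 := Ordinal n_gt0.
have sphere_n0 : unit_sphere !=set0.
  exists (delta_mx 0 i0); rewrite /unit_sphere /= mxform_delta.
  by rewrite mxE !eqxx.
have [c sphere_c cmax] := EVT_max_rV sphere_n0 compact_unit_sphere
  (continuous_subspaceT (@continuous_mxform A)).
have c1 : dotr c c = 1 by move: sphere_c; rewrite inE.
have hle u : mxform A u u <= mxform A c c * dotr u u.
  have [->|u0] := eqVneq u 0; first by rewrite !mxform0l mulr0.
  have u_gt0 := dotr_gt0 u0; pose k := (Num.sqrt (dotr u u))^-1.
  have k2 : k ^+ 2 * dotr u u = 1.
    by rewrite /k exprVn sqr_sqrtr ?ltW // mulVf // gt_eqF.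
  have := cmax (k *: u); rewrite inE /unit_sphere /= !mxformZl !mxformZr mulrA -expr2.
  move=> /(_ k2) /(ler_wpM2r (ltW u_gt0)).
  by rewrite !mulrA -expr2 mulrAC k2 mul1r.
exists (mxform A c c) => //; apply/eigenvalueP; exists c.
  by apply: rayleigh_max_eigenvector => //; rewrite c1 mulr1.
by rewrite -dotr_eq0 c1 oner_eq0.
Qed.

Lemma lambda_max_rayleigh A : A^T = A ->
  eigenvalue A (lambda_max A) /\ forall u, mxform A u u <= lambda_max A * dotr u u.
Proof.
move=> /exists_rayleigh_max [M eM hM].
suff -> : lambda_max A = M by [].
have ubM : ubound [set a | eigenvalue A a] M.
  by move=> a /= ea; apply: eigenvalue_le_rayleigh ea hM.
apply/eqP; rewrite eq_le; apply/andP; split; first by apply: ge_sup => //; exists M.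
by apply: sup_upper_bound => //; split; exists M.
Qed.

Lemma lambda_min_rayleigh A : A^T = A ->
  eigenvalue A (lambda_min A) /\ forall u, lambda_min A * dotr u u <= mxform A u u.
Proof.
move=> symA; have symNA : (- A)^T = - A by rewrite linearN /= symA.
have eigN a : eigenvalue (- A) a = eigenvalue A (- a).
  apply/eigenvalueP/eigenvalueP => -[v vA v0]; exists v => //.
    by rewrite scaleNr -vA mulmxN opprK.
  by rewrite mulmxN vA scaleNr opprK.
have [M eM hM] := exists_rayleigh_max symNA.
suff -> : lambda_min A = - M.
  split=> [|u]; first by rewrite -eigN.
  by rewrite mulNr lerNl -mxform_oppmx.
have lbM : lbound [set a | eigenvalue A a] (- M).
  move=> a /= ea; rewrite lerNl; apply: eigenvalue_le_rayleigh hM.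
  by rewrite eigN opprK.
apply/eqP; rewrite eq_le; apply/andP; split.
  by apply: ge_inf; [exists (- M) | rewrite /= -eigN].
by apply: lb_le_inf lbM; exists (- M); rewrite /= -eigN.
Qed.

Lemma lambda_max_le A c : A^T = A ->
  (forall u, mxform A u u <= c * dotr u u) -> lambda_max A <= c.
Proof. by move=> /lambda_max_rayleigh [eA _]; apply: eigenvalue_le_rayleigh. Qed.

End Rayleigh.

Lemma nonneg_top_eigenvector (R : realFieldType) (n : nat) (A : 'M[R]_n) (L : R) :
  A^T = A -> (forall i j, 0 <= A i j) -> eigenvalue A L ->
  (forall u, mxform A u u <= L * dotr u u) ->
  exists v : 'rV[R]_n, [/\ v != 0, forall i, 0 <= v 0 i & v *m A = L *: v].
Proof.
move=> symA A_ge0 /eigenvalueP [u uA u0] hle.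
pose v := map_mx Num.norm u.
have vv : dotr v v = dotr u u.
  by rewrite !dotrE; apply: eq_bigr => i _; rewrite mxE -normrM -expr2 ger0_norm ?sqr_ge0.
have uAu_le : mxform A u u <= mxform A v v.
  rewrite !mxformE; apply: ler_sum => i _; apply: ler_sum => j _.
  by apply: le_trans (ler_norm _) _; rewrite !normrM (ger0_norm (A_ge0 i j)) !mxE.
exists v; split=> [|i|].
- apply: contra u0 => /eqP v0; apply/eqP/rowP => i.
  by have /rowP/(_ i) := v0; rewrite !mxE => /eqP; rewrite normr_eq0 => /eqP.
- by rewrite mxE normr_ge0.
- apply: rayleigh_max_eigenvector => //; apply/eqP; rewrite eq_le hle /= vv.
  by rewrite -(mxform_eigen _ uA).
Qed.

Section TopEigenspaceProjection.
Variables (R : realFieldType) (n : nat) (A P : 'M[R]_n) (L : R).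
Hypotheses (symA : A^T = A) (symP : P^T = P) (idemP : P *m P = P).
Hypothesis rangeP : (P == eigenspace A L)%MS.
Implicit Types (u v w : 'rV[R]_n).

Lemma proj_eigenvector u : u *m P *m A = L *: (u *m P).
Proof.
by apply/eigenspaceP; apply: submx_trans (submxMl u P) _; case/andP: rangeP.
Qed.

Lemma eigenvector_proj u : u *m A = L *: u -> u *m P = u.
Proof.
move=> /eigenspaceP uE; have /submxP [k ->] : (u <= P)%MS.
  by apply: submx_trans uE _; case/andP: rangeP.
by rewrite -mulmxA idemP.
Qed.

Lemma dotr_proj u v : dotr (u *m P) v = dotr u (v *m P).
Proof. by rewrite dotr_mulmxl dotr_mulmxr symP. Qed.

Lemma dotr_proj_proj u v : dotr (u *m P) (v *m P) = mxform P u v.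
Proof. by rewrite dotr_proj -mulmxA idemP dotr_mulmxr symP. Qed.

Lemma dotr_proj_compl u : dotr (u - u *m P) (u - u *m P) = dotr u u - mxform P u u.
Proof.
rewrite !(mxformBl, mxformBr) dotr_proj_proj dotr_mulmxl dotr_mulmxr symP.
by rewrite opprB addrA subrK.
Qed.

Lemma mxform_proj_le u : mxform P u u <= dotr u u.
Proof. by rewrite -subr_ge0 -dotr_proj_compl dotr_ge0. Qed.

Lemma mxform_proj_gt0 u : (forall i j, 0 <= A i j) -> eigenvalue A L ->
  (forall w, mxform A w w <= L * dotr w w) -> (forall i, 0 < u 0 i) ->
  0 < mxform P u u.
Proof.
move=> A_ge0 eL hL u_gt0.
have [v [v0 v_ge0 vA]] := nonneg_top_eigenvector symA A_ge0 eL hL.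
have vu_gt0 : 0 < dotr v u.
  have vu_ge0 i : 0 <= v 0 i * u 0 i by rewrite mulr_ge0 // ltW.
  rewrite dotrE lt_neqAle sumr_ge0 // andbT eq_sym psumr_eq0 //.
  apply: contra v0 => /allP vu0; apply/eqP/rowP => i; rewrite mxE.
  have := vu0 i (mem_index_enum _).
  by rewrite mulf_eq0 (gt_eqF (u_gt0 i)) orbF => /eqP.
have CS : dotr v u ^+ 2 <= dotr v v * mxform P u u.
  rewrite -[in X in X ^+ 2](eigenvector_proj vA) dotr_proj -dotr_proj_proj.
  exact: dotr_CauchySchwarz.
have Puu_ge0 : 0 <= mxform P u u by rewrite -dotr_proj_proj dotr_ge0.
rewrite lt_neqAle Puu_ge0 andbT eq_sym; apply: contraTneq CS => ->.
by rewrite mulr0 -ltNge exprn_gt0.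
Qed.

Lemma mxform_rank_one_sub_le u mu t be :
  (forall w, mu * dotr w w <= mxform A w w) ->
  (forall X Y s1 s2 q, 0 <= Y -> s1 ^+ 2 <= X * mxform P u u ->
     s2 ^+ 2 <= Y * (dotr u u - mxform P u u) -> mu * Y <= q ->
     (s1 + s2) ^+ 2 - t * (L * X + q) <= be * (X + Y)) ->
  forall v, mxform (u^T *m u - t *: A) v v <= be * dotr v v.
Proof.
move=> hmu hbound v.
have [x [w [-> xA wP0]]] : exists x w, [/\ v = x + w, x *m A = L *: x & w *m P = 0].
  exists (v *m P), (v - v *m P); split; first by rewrite addrC subrK.
    exact: proj_eigenvector.
  by rewrite mulmxBl -mulmxA idemP subrr.
have xP : x *m P = x := eigenvector_proj xA.
have xw0 : dotr x w = 0 by rewrite -xP dotr_proj wP0 mxform0r.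
have normE : dotr (x + w) (x + w) = dotr x x + dotr w w.
  by rewrite mxformDl !mxformDr (dotrC w x) xw0 add0r addr0.
have formE : mxform A (x + w) (x + w) = L * dotr x x + mxform A w w.
  rewrite mxformDl !mxformDr (mxform_sym w x symA) !(mxform_eigen _ xA) xw0.
  by rewrite mulr0 add0r addr0.
have s1_le : dotr x u ^+ 2 <= dotr x x * mxform P u u.
  rewrite -dotr_proj_proj -{1}xP dotr_proj.
  exact: dotr_CauchySchwarz.
have s2_le : dotr w u ^+ 2 <= dotr w w * (dotr u u - mxform P u u).
  have -> : dotr w u = dotr w (u - u *m P).
    by rewrite mxformBr -dotr_proj wP0 mxform0l subr0.
  by rewrite -dotr_proj_compl; apply: dotr_CauchySchwarz.
rewrite mxform_addmx mxform_oppmx mxform_scalemx mxform_outer normE formE mxformDl.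
by apply: hbound; [apply: dotr_ge0 | exact: s1_le | exact: s2_le | apply: hmu].
Qed.

End TopEigenspaceProjection.

Lemma sqr_add_le_weighted (R : realDomainType) (r s1 s2 : R) :
  r * (s1 + s2) ^+ 2 <= r * (1 + r) * s1 ^+ 2 + (1 + r) * s2 ^+ 2.
Proof.
rewrite -subr_ge0.
have -> : r * (1 + r) * s1 ^+ 2 + (1 + r) * s2 ^+ 2 - r * (s1 + s2) ^+ 2
          = (r * s1 - s2) ^+ 2 by ring.
exact: sqr_ge0.
Qed.

Lemma theta_weight_exists (R : rcfType) (a b L m : R) :
  0 < a -> 0 <= b -> 0 < L -> 0 < m -> m * b / (L * a) <= 1 ->
  let r := Num.sqrt (L * b / (m * a)) in
  exists t, forall X Y s1 s2 q, 0 <= Y -> s1 ^+ 2 <= X * a -> s2 ^+ 2 <= Y * b ->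
    - m * Y <= q ->
    (s1 + s2) ^+ 2 - t * (L * X + q) <= m * a / (L + m) * (1 + r) ^+ 2 * (X + Y).
Proof.
move=> a_gt0 b_ge0 L_gt0 m_gt0 hb r; set be := m * a / (L + m) * _.
have r_ge0 : 0 <= r := sqrtr_ge0 _.
have Lm_neq0 : L + m != 0 by rewrite gt_eqF ?addr_gt0.
have rE : L * b = m * a * r ^+ 2.
  rewrite sqr_sqrtr; last by rewrite divr_ge0 ?mulr_ge0 // ltW.
  by field; rewrite !gt_eqF.
have mr_le : m * r <= L.
  have mb_le : m * b <= L * a by rewrite -[L * a]mul1r -ler_pdivrMr ?mulr_gt0.
  have : (m * r) ^+ 2 <= L ^+ 2.
    rewrite exprMn -(ler_pM2l a_gt0).
    have -> : a * (m ^+ 2 * r ^+ 2) = m * (L * b) by rewrite rE; ring.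
    by nra.
  by rewrite ler_sqr // nnegrE ?mulr_ge0 // ltW.
(* [t] makes [be + t L = a (1 + r)] and [r (be - t m) = b (1 + r)], the weights
   of the inequality [sqr_add_le_weighted]. *)
pose t := a * (1 + r) * (L - m * r) / (L * (L + m)).
have t_ge0 : 0 <= t.
  apply: divr_ge0; first by rewrite mulr_ge0 ?subr_ge0 // mulr_ge0 ?addr_ge0 // ltW.
  by rewrite ltW // mulr_gt0 ?addr_gt0.
have beL : be + t * L = a * (1 + r) by rewrite /be /t; field; rewrite Lm_neq0 gt_eqF.
have bem : be - t * m = m * a * r * (1 + r) / L.
  by rewrite /be /t; field; rewrite Lm_neq0 gt_eqF.
have bem_ge0 : 0 <= be - t * m.
  by rewrite bem divr_ge0 ?mulr_ge0 ?addr_ge0 // ltW.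
have rbem : r * (be - t * m) = b * (1 + r).
  have bE : b = m * a * r ^+ 2 / L by rewrite -rE; field; rewrite gt_eqF.
  by rewrite bem bE; field; rewrite gt_eqF.
exists t => X Y s1 s2 q Y_ge0 s1_le s2_le q_ge.
have tq := ler_wpM2l t_ge0 q_ge.
suff : (s1 + s2) ^+ 2 <= (be + t * L) * X + (be - t * m) * Y by lra.
have [r0|r_neq0] := eqVneq r 0.
  move: rbem s2_le; rewrite r0 mul0r addr0 mulr1 => <-; rewrite mulr0 => s2_le.
  have -> : s2 = 0 by apply/eqP; rewrite -sqrf_eq0 eq_le sqr_ge0 andbT.
  by rewrite beL r0 !addr0 mulr1 mulrC; nra.
have r_gt0 : 0 < r by rewrite lt_def r_neq0.
rewrite -(ler_pM2l r_gt0); apply: le_trans (sqr_add_le_weighted r s1 s2) _.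
rewrite beL [X in _ <= X]mulrDr [r * (_ * Y)]mulrA rbem.
have := ler_wpM2l (ltW r_gt0) s1_le; have := ler_wpM2l (addr_ge0 ler01 r_ge0) s2_le.
nra.
Qed.

Lemma lovasz_theta_le (R : realType) (n : nat) (e : rel 'I_n) (B : 'M[R]_n) :
  (0 < n)%N -> theta_feasible e B -> lovasz_theta R e <= lambda_max B.
Proof.
move=> n_gt0 fB; apply: ge_inf; last by exists B.
exists 1 => _ [B' [symB' B'1] <-]; pose i := Ordinal n_gt0.
have [_ /(_ (delta_mx 0 i))] := lambda_max_rayleigh n_gt0 symB'.
by rewrite !mxform_delta mxE B'1 ?eqxx // mulr1.
Qed.

Section AdjacencyMatrix.
Variables (R : realType) (n : nat) (e : rel 'I_n).
Hypothesis simple_e : simple_graph e.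
Local Notation A := (adjmx R e).

Lemma adjmx_tr : A^T = A.
Proof. by apply/matrixP => i j; rewrite !mxE; case: simple_e => _ ->. Qed.

Lemma adjmx_ge0 i j : 0 <= A i j.
Proof. by rewrite mxE ler0n. Qed.

Lemma mxform_adjmx_edge i j s : e i j ->
  let u := delta_mx 0 i + s *: delta_mx 0 j in
  mxform A u u = 2 * s /\ dotr u u = 1 + s ^+ 2.
Proof.
case: simple_e => irr sym eij u; have ij : i != j by apply: contraTneq eij => ->.
rewrite !(mxformDl, mxformDr, mxformZl, mxformZr) !mxform_delta !mxE.
rewrite (sym j i) eij !eqxx (negbTE ij) eq_sym (negbTE ij) !(negbTE (irr _)).
by split; rewrite /=; ring.
Qed.

Lemma lambda_max_adjmx_gt0 i j : e i j -> 0 < lambda_max A.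
Proof.
move=> eij; have n_gt0 : (0 < n)%N := leq_ltn_trans (leq0n i) (ltn_ord i).
have [_ /(_ (delta_mx 0 i + 1 *: delta_mx 0 j))] := lambda_max_rayleigh n_gt0 adjmx_tr.
by have [-> ->] := mxform_adjmx_edge 1 eij; nra.
Qed.

Lemma lambda_min_adjmx_lt0 i j : e i j -> lambda_min A < 0.
Proof.
move=> eij; have n_gt0 : (0 < n)%N := leq_ltn_trans (leq0n i) (ltn_ord i).
have [_ /(_ (delta_mx 0 i + (-1) *: delta_mx 0 j))] := lambda_min_rayleigh n_gt0 adjmx_tr.
by have [-> ->] := mxform_adjmx_edge (-1) eij; nra.
Qed.

Lemma theta_feasible_ones_sub_adjmx t : theta_feasible e (const_mx 1 - t *: A).
Proof.
split; first by rewrite /symmetric_mx linearB linearZ /= trmx_const adjmx_tr.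
case: simple_e => irr _ i j /orP hij; rewrite !mxE.
by case: hij => [/eqP ->|/negbTE ->]; rewrite ?(negbTE (irr _)) mulr0 subr0.
Qed.

End AdjacencyMatrix.

Theorem corollary2 (R : realType) (n : nat) (e : rel 'I_n) (P : 'M[R]_n) :
  simple_graph e -> has_edge e ->
  let A := adjmx R e in
  let l1 := lambda_max A in
  let ln := lambda_min A in
  orth_proj_onto P (eigenspace A l1) ->
  let p := ip (ones R n) (P *m ones R n) in
  (- ln * (n%:R - p)) / (l1 * p) <= 1 ->
  lovasz_theta R e <=
    (- n%:R * ln) / (l1 - ln) * (p / n%:R)
      * (1 + Num.sqrt ((l1 * (n%:R - p)) / (- ln * p))) ^+ 2.
Proof.
move=> simple_e [i [j eij]] A l1 ln [symP [idemP rangeP]] p hb.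
have n_gt0 : (0 < n)%N := leq_ltn_trans (leq0n i) (ltn_ord i).
have symA := adjmx_tr R simple_e.
have [eL hL] := lambda_max_rayleigh n_gt0 symA.
have [_ hmin] := lambda_min_rayleigh n_gt0 symA.
have l1_gt0 : 0 < l1 := lambda_max_adjmx_gt0 R simple_e eij.
have ln_lt0 : ln < 0 := lambda_min_adjmx_lt0 R simple_e eij.
have pE : p = mxform P (const_mx 1) (const_mx 1) := ip_ones_mulmx P.
have p_gt0 : 0 < p.
  rewrite pE (mxform_proj_gt0 symA symP idemP rangeP) // => [k l|k].
    exact: adjmx_ge0.
  by rewrite mxE ltr01.
have np_ge0 : 0 <= n%:R - p.
  by rewrite subr_ge0 pE -dotr_const1 (mxform_proj_le symP idemP).
have Nln_gt0 : 0 < - ln by rewrite oppr_gt0.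
have [t ht] := theta_weight_exists p_gt0 np_ge0 l1_gt0 Nln_gt0 hb.
rewrite (_ : - n%:R * ln / (l1 - ln) * (p / n%:R) = - ln * p / (l1 - ln)); last first.
  by field; rewrite pnatr_eq0 -lt0n n_gt0 gt_eqF // subr_gt0 (lt_trans ln_lt0).
have feasB := theta_feasible_ones_sub_adjmx simple_e t.
apply: le_trans (lovasz_theta_le n_gt0 feasB) _.
apply: lambda_max_le n_gt0 _ _ (proj1 feasB) _.
rewrite const1_outer; apply: (mxform_rank_one_sub_le symA symP idemP rangeP hmin).
move=> X Y s1 s2 q; rewrite -pE dotr_const1 => Y_ge0 s1_le s2_le q_ge.
by apply: ht; rewrite ?opprK.
Qed.
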